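(* Let $\Lambda$ be a cohomology algebra of $b^+=1$ type. Then the subgroup $I_T\subseteq\Lambda^2$ generated by all products $xy$ with $x,y\in\Lambda^1$ has rank at most $1$, and $\tilde b_1(\Lambda)$ is even.
   Context: A cohomology algebra is a graded, commutative, associative algebra $\Lambda=\bigoplus_{i=0}^4\Lambda^i$ over $\Lambda^0=\mathbb{Z}$, each $\Lambda^i$ free abelian of finite rank $b_i(\Lambda)$, with an isomorphism $p:\Lambda^4\cong\mathbb{Z}$ such that each product pairing $\Lambda^i\times\Lambda^{4-i}\to\mathbb{Z}$ is perfect. $\Gamma(x,y)=p(xy)$ on $\Lambda^2$ is a unimodular symmetric form; $b^+=1$ type means $\Gamma$ has exactly one positive eigenvalue. $\ker T=\{x\in\Lambda^1: xy=0\ \forall y\in\Lambda^1\}$ and $\tilde b_1(\Lambda)=b_1(\Lambda)-\mathrm{rank}\ker T$ (the rank of the skew-symmetric product pairing $T:\Lambda^1\times\Lambda^1\to\Lambda^2$). *)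

From HB Require Import structures.
From mathcomp Require Import all_boot all_order all_algebra all_field.
Import Order.TTheory GRing.Theory Num.Theory.
Local Open Scope ring_scope.

(* We fix Z-bases, so
   Lambda^i = 'rV[int]_(b_i); Lambda^0 = Z (acting by scalar multiplication,
   1 the unit) and Lambda^4 = Z (i.e. the isomorphism p is the identity).
   The products of positive-degree pieces are recorded by
     mul11 : L1 x L1 -> L2,  mul12 : L1 x L2 -> L3,
     mul13 : L1 x L3 -> L4 = Z,  mul22 : L2 x L2 -> L4 = Z;
   the products in the remaining orders are determined by graded
   commutativity:  w x = x w (w in L2),  z x = - x z (z in L3). *)
Record coh_data := CohData {
  b1 : nat; b2 : nat; b3 : nat;
  mul11 : 'rV[int]_b1 -> 'rV[int]_b1 -> 'rV[int]_b2;
  mul12 : 'rV[int]_b1 -> 'rV[int]_b2 -> 'rV[int]_b3;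
  mul13 : 'rV[int]_b1 -> 'rV[int]_b3 -> int;
  mul22 : 'rV[int]_b2 -> 'rV[int]_b2 -> int }.

Set Implicit Arguments. Unset Strict Implicit. Unset Printing Implicit Defensive.

Definition biadditive (U V W : zmodType) (f : U -> V -> W) : Prop :=
  (forall x x' y, f (x + x') y = f x y + f x' y) /\
  (forall x y y', f x (y + y') = f x y + f x y').

Definition additive_fun (U W : zmodType) (f : U -> W) : Prop :=
  forall x x', f (x + x') = f x + f x'.

Definition perfect (m n : nat) (f : 'rV[int]_m -> 'rV[int]_n -> int) : Prop :=
  (forall phi : 'rV[int]_n -> int, additive_fun phi ->
     exists! x, forall y, f x y = phi y) /\
  (forall psi : 'rV[int]_m -> int, additive_fun psi ->
     exists! y, forall x, f x y = psi x).

Definition is_cohomology_algebra (A : coh_data) : Prop :=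
  [/\ biadditive (mul11 A), biadditive (mul12 A),
      biadditive (mul13 A) & biadditive (mul22 A)]
  /\
  (forall x y, mul11 A x y = - mul11 A y x) /\
  (forall w w', mul22 A w w' = mul22 A w' w) /\
  (* associativity, degrees (1,1,1), (1,1,2), (1,2,1), (2,1,1) *)
  (forall x y z, mul12 A z (mul11 A x y) = mul12 A x (mul11 A y z)) /\
  (forall x y w, mul22 A (mul11 A x y) w = mul13 A x (mul12 A y w)) /\
  (forall x w y, - mul13 A y (mul12 A x w) = mul13 A x (mul12 A y w)) /\
  (forall w x y, - mul13 A y (mul12 A x w) = mul22 A w (mul11 A x y)) /\
  (* Poincare duality: perfect pairings L1 x L3 and L2 x L2
     (L0 x L4 = Z x Z -> Z is multiplication, automatically perfect) *)
  perfect (mul13 A) /\ perfect (mul22 A).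

Definition ebasis (n : nat) (i : 'I_n) : 'rV[int]_n := delta_mx 0 i.

Definition int2rat (m n : nat) (M : 'M[int]_(m, n)) : 'M[rat]_(m, n) :=
  map_mx (fun z : int => z%:~R) M.

Definition Gamma (A : coh_data) : 'M[int]_(b2 A) :=
  \matrix_(i, j) mul22 A (ebasis i) (ebasis j).

Definition bplus_one (A : coh_data) : Prop :=
  exists lam : 'I_(b2 A) -> algC,
    char_poly (map_mx (fun z : int => z%:~R : algC) (Gamma A))
      = \prod_(i < b2 A) ('X - (lam i)%:P)
    /\ #|[pred i | 0 < lam i]| = 1%N.

(* rank of I_T = subgroup of L2 generated by all products x y, x, y in L1;
   by bilinearity it is generated by the products of basis vectors, and
   its rank is the dimension of its rational span. *)
Definition rank_IT (A : coh_data) : nat :=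
  \rank (\sum_(i < b1 A) \sum_(j < b1 A)
           <<int2rat (mul11 A (ebasis i) (ebasis j))>>)%MS.

(* ker T = { x in L1 | x y = 0 for all y in L1 }; its rank is the dimension
   of the rational kernel of x |-> (x e_j)_j. *)
Definition Tmat (A : coh_data) (j : 'I_(b1 A)) : 'M[int]_(b1 A, b2 A) :=
  \matrix_(i, k) mul11 A (ebasis i) (ebasis j) 0 k.

Definition rank_kerT (A : coh_data) : nat :=
  \rank (\bigcap_(j < b1 A) kermx (int2rat (Tmat j)))%MS.

Definition tilde_b1 (A : coh_data) : nat := (b1 A - rank_kerT A)%N.

From HB Require Import structures.
From mathcomp Require Import all_boot all_order all_algebra all_field.
From mathcomp Require Import ring zify lra.
Import Order.TTheory GRing.Theory Num.Theory.
Set Implicit Arguments. Unset Strict Implicit. Unset Printing Implicit Defensive.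
Local Open Scope ring_scope.

(* Since Gamma has exactly one positive eigenvalue, the spectral theorem shows
   that no two orthogonal classes both have positive square.  For a suitable
   such pair in the span of xy, zw, xz, yw, graded commutativity and
   associativity force xyzw = 0, so the products of degree-one classes span a
   totally isotropic subspace I_T of the nondegenerate form Gamma, which then
   has rank at most one.  Writing xy = T(x, y) v for a generator v of I_T,
   ker T becomes the kernel of a skew-symmetric rational matrix, whose rank is
   even. *)

Section AdditiveFun.
Variables (U W : zmodType) (f : U -> W).
Hypothesis fA : additive_fun f.

Lemma additive_fun0 : f 0 = 0.
Proof. by apply: (@addrI _ (f 0)); rewrite -fA !addr0. Qed.

Lemma additive_funN x : f (- x) = - f x.
Proof. by apply/eqP; rewrite -subr_eq0 opprK -fA addNr additive_fun0. Qed.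

Lemma additive_funMz x k : f (x *~ k) = f x *~ k.
Proof.
have fMn n : f (x *+ n) = f x *+ n.
  by elim: n => [|n IHn]; rewrite ?mulr0n ?additive_fun0 // !mulrS fA IHn.
by case: k => n; rewrite ?NegzE ?mulrNz ?additive_funN fMn.
Qed.

Lemma additive_fun_sum (I : finType) (F : I -> U) : f (\sum_i F i) = \sum_i f (F i).
Proof. by elim/big_rec2: _ => [|i y1 y2 _ <-]; rewrite ?additive_fun0 ?fA. Qed.

End AdditiveFun.

Section BilinearForm.
Variables (R : comNzRingType) (n : nat) (M : 'M[R]_n).

Definition bform (a b : 'rV[R]_n) : R := (a *m M *m b^T) 0 0.

Lemma bformDl a b c : bform (a + b) c = bform a c + bform b c.
Proof. by rewrite /bform !mulmxDl mxE. Qed.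

Lemma bformDr a b c : bform c (a + b) = bform c a + bform c b.
Proof. by rewrite /bform linearD /= mulmxDr mxE. Qed.

Lemma bformZl k a c : bform (k *: a) c = k * bform a c.
Proof. by rewrite /bform -!scalemxAl mxE. Qed.

Lemma bformZr k a c : bform c (k *: a) = k * bform c a.
Proof. by rewrite /bform linearZ /= -scalemxAr mxE. Qed.

Lemma bform_row m p (X : 'M_(m, n)) (Y : 'M_(p, n)) i j :
  bform (row i X) (row j Y) = (X *m M *m Y^T) i j.
Proof. by rewrite /bform -row_mul tr_row !mxE; apply: eq_bigr => k _; rewrite !mxE. Qed.

Lemma bform_sym : M^T = M -> forall a b, bform a b = bform b a.
Proof.
move=> MT a b; have tr11 (B : 'M[R]_1) : B 0 0 = B^T 0 0 by rewrite mxE.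
by rewrite /bform tr11 !trmx_mul trmxK MT mulmxA.
Qed.

End BilinearForm.

Definition no_pos_orth_pair (F : numDomainType) n (M : 'M[F]_n) : Prop :=
  forall a b : 'rV_n, bform M a b = 0 -> 0 < bform M a a -> 0 < bform M b b -> False.

Lemma char_poly_similar (R : comUnitRingType) n (P D : 'M[R]_n) :
  P \in unitmx -> char_poly (invmx P *m D *m P) = char_poly D.
Proof.
move=> Pu; rewrite /char_poly /char_poly_mx.
have XP : 'X%:M = map_mx polyC (invmx P) *m 'X%:M *m map_mx polyC P :> 'M[{poly R}]_n.
  by rewrite mul_mx_scalar -scalemxAl -map_mxM mulVmx // map_mx1 scalemx1.
rewrite [in LHS]XP !map_mxM -mulmxBl -mulmxBr !det_mulmx mulrC mulrA.
by rewrite -det_mulmx -map_mxM mulmxV // map_mx1 det1 mul1r.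
Qed.

Section DiagonalHermitianForm.
Variables (C : numClosedFieldType) (n : nat) (d : 'rV[C]_n) (k : 'I_n).
Hypothesis d_le0 : forall i, i != k -> d 0 i <= 0.

Definition diag_sform (a b : 'rV[C]_n) : C := \sum_i a 0 i * d 0 i * (b 0 i)^*.

Lemma diag_sform_le0 (c : 'rV[C]_n) : c 0 k = 0 -> diag_sform c c <= 0.
Proof.
move=> ck; apply: sumr_le0 => i _; have [->|ik] := eqVneq i k; first by rewrite ck !mul0r.
by rewrite mulrAC mulr_ge0_le0 ?mul_conjC_ge0 ?d_le0.
Qed.

(* The combination b_k a - a_k b kills the only positive coordinate. *)
Lemma diag_sform_no_pos_orth_pair a b :
  0 < diag_sform a a -> 0 < diag_sform b b ->
  diag_sform a b = 0 -> diag_sform b a = 0 -> False.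
Proof.
move=> Ha Hb Hab Hba.
have [ak0|ak_neq0] := eqVneq (a 0 k) 0.
  by have := lt_le_trans Ha (diag_sform_le0 ak0); rewrite ltxx.
pose c := b 0 k *: a - a 0 k *: b.
have ck : c 0 k = 0 by rewrite !mxE; ring.
have expand_c : diag_sform c c = b 0 k * (b 0 k)^* * diag_sform a a
    - b 0 k * (a 0 k)^* * diag_sform a b - a 0 k * (b 0 k)^* * diag_sform b a
    + a 0 k * (a 0 k)^* * diag_sform b b.
  rewrite /diag_sform !mulr_sumr -!sumrB -big_split /=; apply: eq_bigr => i _.
  by rewrite !mxE !(rmorphB, rmorphM) /=; ring.
have c_pos : 0 < diag_sform c c.
  rewrite expand_c Hab Hba !mulr0 !subr0; apply: ltr_wpDl.
    by rewrite mulr_ge0 ?mul_conjC_ge0 ?ltW.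
  by rewrite mulr_gt0 // mul_conjC_gt0.
by have := lt_le_trans c_pos (diag_sform_le0 ck); rewrite ltxx.
Qed.

End DiagonalHermitianForm.

Lemma card_count (T : finType) (P : pred T) : #|P| = count P (index_enum T).
Proof. by rewrite cardE [index_enum T]unlock -size_filter. Qed.

Local Open Scope sesquilinear_scope.

Lemma hermitian_one_pos_eig_no_orth_pair (C : numClosedFieldType) n
    (G : 'M[C]_n) (lam : 'I_n -> C) :
  G \is hermsymmx -> char_poly G = \prod_(i < n) ('X - (lam i)%:P) ->
  #|[pred i | 0 < lam i]| = 1%N ->
  forall a b : 'rV_n, 0 < (a *m G *m a^t*) 0 0 -> 0 < (b *m G *m b^t*) 0 0 ->
  (a *m G *m b^t*) 0 0 = 0 -> (b *m G *m a^t*) 0 0 = 0 -> False.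
Proof.
move=> Gherm Gchar one_pos a b.
have /orthomx_spectralP G_spectral := hermitian_normalmx Gherm.
set P := spectralmx G in G_spectral; set d := spectral_diag G in G_spectral.
have d_real : d \is a realmx := hermitian_spectral_diag_real Gherm.
have d_char : char_poly G = \prod_(i < n) ('X - (d 0 i)%:P).
  rewrite G_spectral char_poly_similar ?spectral_unit // char_poly_trig ?diag_mx_is_trig //.
  by apply: eq_bigr => i _; rewrite !mxE eqxx mulr1n.
have d_lam : perm_eq [seq d 0 i | i <- index_enum 'I_n] [seq lam i | i <- index_enum 'I_n].
  by apply: prod_XsubC_eq; rewrite !big_map -Gchar -d_char.
have /card1P [k dk] : #|[pred i | 0 < d 0 i]| == 1%N.
  apply/eqP; rewrite -[RHS]one_pos !card_count.
  by move/permP: d_lam => /(_ (fun x : C => 0 < x)); rewrite !count_map => ->.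
have d_le0 i : i != k -> d 0 i <= 0.
  move=> ik; have := dk i; rewrite !inE (negbTE ik) => /negbT.
  by rewrite real_ltNge ?(mxOverP d_real) ?real0 // negbK.
have to_diag x y : (x *m G *m y^t*) 0 0 = diag_sform d (x *m P^t*) (y *m P^t*).
  have -> : diag_sform d (x *m P^t*) (y *m P^t*)
           = (x *m P^t* *m diag_mx d *m (y *m P^t*)^t*) 0 0.
    by rewrite mul_mx_diag !mxE; apply: eq_bigr => i _; rewrite !mxE.
  by rewrite G_spectral invmx_unitary ?spectral_unitarymx // trmx_mul map_mxM trmxCK !mulmxA.
rewrite !to_diag; exact: (diag_sform_no_pos_orth_pair d_le0).
Qed.

Local Close Scope sesquilinear_scope.

(* If u0, u1 span an isotropic plane and w0, w1 are dual to them, then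
   p = w0 + t0 u0 and q = w1 + t1 u1 + c u0 have norm 1 and are orthogonal
   for suitable t0, t1, c. *)
Lemma isotropic_rank_le1 (F : realFieldType) n (M : 'M[F]_n) m (S : 'M[F]_(m, n)) :
  M^T = M -> M \in unitmx -> no_pos_orth_pair M ->
  S *m M *m S^T = 0 -> (\rank S <= 1)%N.
Proof.
move=> Msym Munit Mpos S_iso; rewrite leqNgt; apply/negP => rankS2.
pose U := row_base S.
have [X defU] : exists X, U = X *m S by apply/submxP; rewrite eq_row_base.
have U_iso : U *m M *m U^T = 0.
  by rewrite defU trmx_mul !mulmxA -(mulmxA X) -(mulmxA X) S_iso mulmx0 mul0mx.
have /row_fullP [W WMU] : row_full (U *m M)^T.
  rewrite /row_full mxrank_tr mxrankMfree ?row_free_unit //.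
  by rewrite eqn_leq rank_leq_row /= eq_row_base.
have WMU1 : W *m M *m U^T = 1%:M by rewrite -WMU [(U *m M)^T]trmx_mul Msym mulmxA.
have uu a b : bform M (row a U) (row b U) = 0 by rewrite bform_row U_iso mxE.
have wu a b : bform M (row a W) (row b U) = (a == b)%:R by rewrite bform_row WMU1 mxE.
have uw a b : bform M (row a U) (row b W) = (b == a)%:R by rewrite bform_sym.
pose i0 := Ordinal (ltnW rankS2 : 0 < \rank S)%N; pose i1 := Ordinal rankS2.
have i01 : (i0 == i1) = false by [].
have i10 : (i1 == i0) = false by [].
set u0 := row i0 U; set u1 := row i1 U; set w0 := row i0 W; set w1 := row i1 W.
pose t0 := (1 - bform M w0 w0) / 2; pose t1 := (1 - bform M w1 w1) / 2.
pose c := - bform M w0 w1.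
have w10 : bform M w1 w0 = bform M w0 w1 by rewrite bform_sym.
apply: (Mpos (w0 + t0 *: u0) (w1 + t1 *: u1 + c *: u0));
  rewrite !(bformDl, bformDr, bformZl, bformZr) !uu !wu !uw ?eqxx ?i01 ?i10 ?w10 /t0 /t1 /c /=.
- ring.
- lra.
- lra.
Qed.

Lemma row_mul_tr_eq0 (F : realFieldType) n (b : 'rV[F]_n) : b *m b^T = 0 -> b = 0.
Proof.
move=> bb0; have : (b *m b^T) 0 0 == 0 by rewrite bb0 mxE.
have sq_ge0 (k : 'I_n) : true -> 0 <= b 0 k * b^T k 0 by rewrite mxE -expr2 sqr_ge0.
rewrite mxE => /eqP /(psumr_eq0P sq_ge0) sq0.
apply/matrixP => i j; rewrite (ord1 i) mxE.
by have /eqP := sq0 j isT; rewrite mxE -expr2 sqrf_eq0 => /eqP.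
Qed.

Lemma skew_det_eq0 (F : numFieldType) n (M : 'M[F]_n) : M^T = - M -> odd n -> \det M = 0.
Proof.
move=> Mskew n_odd; have : \det M = - \det M.
  by rewrite -{1}det_tr Mskew -scaleN1r detZ -signr_odd n_odd expr1 mulN1r.
by move/eqP; rewrite -subr_eq0 opprK -mulr2n -mulr_natr mulf_eq0 pnatr_eq0 orbF => /eqP.
Qed.

Lemma skew_compress_unit (F : realFieldType) n (O : 'M[F]_n) :
  O^T = - O -> row_base O *m O *m (row_base O)^T \in unitmx.
Proof.
move=> Oskew; set P := row_base O.
rewrite -row_free_unit -kermx_eq0; apply/rowV0P => c /sub_kermxP cM0.
pose a := c *m P.
have aOP : a *m O *m P^T = 0 by rewrite /a -cM0 !mulmxA.
have aO0 : a *m O = 0.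
  have [d defaO] : exists d, a *m O = d *m P by apply/submxP; rewrite eq_row_base submxMl.
  by apply: row_mul_tr_eq0; rewrite {2}defaO trmx_mul mulmxA aOP mul0mx.
have a0 : a = 0.
  have [e defa] : exists e, a = e *m O by apply/submxP; rewrite -(eq_row_base O) submxMl.
  have Oa0 : O *m a^T = 0 by rewrite -[O]trmxK Oskew -trmx_mul mulmxN aO0 oppr0 trmx0.
  by apply: row_mul_tr_eq0; rewrite {1}defa -mulmxA Oa0 mulmx0.
by apply: (row_free_inj (row_base_free O)); rewrite mul0mx; exact: a0.
Qed.

Lemma skew_rank_even (F : realFieldType) n (O : 'M[F]_n) : O^T = - O -> ~~ odd (\rank O).
Proof.
move=> Oskew; apply/negP => odd_rank.
have := skew_compress_unit Oskew; rewrite unitmxE skew_det_eq0 ?unitr0 //.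
by rewrite trmx_mul trmxK trmx_mul Oskew mulNmx mulmxN mulmxA.
Qed.

Lemma rank_le1_sub_row (F : fieldType) m n (V : 'M[F]_(m, n)) :
  (\rank V <= 1)%N -> exists v : 'rV_n, (V <= v)%MS.
Proof.
have [rank0 _|rank_gt0 rank_le1] := posnP (\rank V).
  by exists 0; move/eqP: rank0; rewrite mxrank_eq0 => /eqP ->; rewrite sub0mx.
exists (row (Ordinal rank_gt0) (row_base V)).
rewrite -(eq_row_base V); apply/row_subP => i.
by rewrite (_ : i = Ordinal rank_gt0) //; apply: val_inj => /=; have := ltn_ord i; lia.
Qed.

Lemma row_ebasis n (x : 'rV[int]_n) : x = \sum_i ebasis i *~ x 0 i.
Proof. by rewrite {1}(row_sum_delta x); apply: eq_bigr => i _; rewrite -scaler_int intz. Qed.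

Section CohomologyAlgebra.
Variable A : coh_data.
Hypothesis HA : is_cohomology_algebra A.

Local Notation L1 := 'rV[int]_(b1 A).
Local Notation L2 := 'rV[int]_(b2 A).

Lemma mul22_additivel (y : L2) : additive_fun (mul22 A ^~ y).
Proof. by case: HA => -[_ _ _ [m22D _]] _ x x'; apply: m22D. Qed.

Lemma mul22_additiver (x : L2) : additive_fun (mul22 A x).
Proof. by case: HA => -[_ _ _ [_ m22D]] _ y y'; apply: m22D. Qed.

Lemma mul11C (x y : L1) : mul11 A x y = - mul11 A y x.
Proof. by case: HA => _ []. Qed.

Lemma mul22C (w w' : L2) : mul22 A w w' = mul22 A w' w.
Proof. by case: HA => _ [_ []]. Qed.

Lemma mul12_mul11 (x y z : L1) : mul12 A z (mul11 A x y) = mul12 A x (mul11 A y z).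
Proof. by case: HA => _ [_ [_ []]]. Qed.

Lemma mul22_mul11 (x y : L1) (w : L2) : mul22 A (mul11 A x y) w = mul13 A x (mul12 A y w).
Proof. by case: HA => _ [_ [_ [_ []]]]. Qed.

Lemma mul11xx (x : L1) : mul11 A x x = 0.
Proof.
apply/rowP => k; have /rowP/(_ k)/eqP := mul11C x x; rewrite !mxE -subr_eq0 opprK.
by rewrite -mulr2n -mulr_natr mulf_eq0 pnatr_eq0 orbF => /eqP.
Qed.

Lemma mul22Dl (w w' v : L2) : mul22 A (w + w') v = mul22 A w v + mul22 A w' v.
Proof. exact: mul22_additivel. Qed.

Lemma mul22Dr (w v v' : L2) : mul22 A w (v + v') = mul22 A w v + mul22 A w v'.
Proof. exact: mul22_additiver. Qed.

Lemma mul22Nl (w v : L2) : mul22 A (- w) v = - mul22 A w v.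
Proof. exact: additive_funN (mul22_additivel v) w. Qed.

Lemma mul22Nr (w v : L2) : mul22 A w (- v) = - mul22 A w v.
Proof. exact: additive_funN (mul22_additiver w) v. Qed.

Lemma mul22Mzl (w v : L2) k : mul22 A (w *~ k) v = mul22 A w v * k.
Proof. by rewrite -mulrzz; exact: additive_funMz (mul22_additivel v) w k. Qed.

Lemma mul22Mzr (w v : L2) k : mul22 A w (v *~ k) = mul22 A w v * k.
Proof. by rewrite -mulrzz; exact: additive_funMz (mul22_additiver w) v k. Qed.

Definition prod4 (x y z w : L1) : int := mul22 A (mul11 A x y) (mul11 A z w).

Lemma prod4C x y z w : prod4 x y z w = prod4 z w x y.
Proof. exact: mul22C. Qed.

Lemma prod4_swap12 x y z w : prod4 x y z w = - prod4 y x z w.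
Proof. by rewrite /prod4 mul11C mul22Nl. Qed.

Lemma prod4_swap34 x y z w : prod4 x y z w = - prod4 x y w z.
Proof. by rewrite /prod4 (mul11C z) mul22Nr. Qed.

Lemma prod4_swap23 x y z w : prod4 x y z w = - prod4 x z y w.
Proof.
by rewrite /prod4 mul22_mul11 (mul12_mul11 z w y) -mul22_mul11 (mul11C w) mul22Nr.
Qed.

Lemma prod4_xx x z w : prod4 x x z w = 0.
Proof. by rewrite /prod4 mul11xx (additive_fun0 (mul22_additivel _)). Qed.

Lemma prod4_xyx x y z : prod4 x y x z = 0.
Proof. by rewrite prod4_swap23 prod4_xx oppr0. Qed.

Lemma prod4_xyy x y z : prod4 x y y z = 0.
Proof. by rewrite prod4_swap12 prod4_swap23 prod4_xx !oppr0. Qed.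

(* With c = (xy)(zw), the classes p = xy + c zw and q = xz - c yw satisfy
   pq = 0 and p^2 = q^2 = 2 c^2. *)
Lemma prod4_eq0_of_no_pair
    (no_pair : forall p q : L2, mul22 A p q = 0 ->
       0 < mul22 A p p -> 0 < mul22 A q q -> False) x y z w :
  prod4 x y z w = 0.
Proof.
set c := prod4 x y z w; have [//|c_neq0] := eqVneq c 0.
have cc_gt0 : 0 < c * c by rewrite lt0r mulf_eq0 orbb c_neq0 -expr2 sqr_ge0.
exfalso; apply: (no_pair (mul11 A x y + mul11 A z w *~ c)
                         (mul11 A x z + mul11 A y w *~ - c));
  rewrite !(mul22Dl, mul22Dr, mul22Mzl, mul22Mzr) -!/(prod4 _ _ _ _).
- rewrite prod4_xyx prod4_xyy [prod4 z w x z]prod4C prod4_xyy.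
  by rewrite [prod4 z w y w]prod4C prod4_swap34 prod4_xyy; ring.
- rewrite !prod4_xyx [prod4 z w x y]prod4C -/c; lia.
- rewrite !prod4_xyx [prod4 y w x z]prod4C prod4_swap23 -/c mulrNN; lia.
Qed.

Definition GammaQ : 'M[rat]_(b2 A) := int2rat (Gamma A).

Lemma mul22_Gamma (w v : L2) : mul22 A w v = (w *m Gamma A *m v^T) 0 0.
Proof.
have expand : mul22 A w v = \sum_i \sum_j w 0 i * mul22 A (ebasis i) (ebasis j) * v 0 j.
  rewrite {1}(row_ebasis w) (additive_fun_sum (mul22_additivel v)); apply: eq_bigr => i _.
  rewrite mul22Mzl {1}(row_ebasis v) (additive_fun_sum (mul22_additiver _)) mulr_suml.
  by apply: eq_bigr => j _; rewrite mul22Mzr; ring.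
rewrite expand mxE exchange_big; apply: eq_bigr => j _; rewrite !mxE mulr_suml.
by apply: eq_bigr => i _; rewrite !mxE.
Qed.

Lemma bform_GammaQ (w v : L2) : bform GammaQ (int2rat w) (int2rat v) = (mul22 A w v)%:~R.
Proof. by rewrite mul22_Gamma /bform /GammaQ /int2rat map_trmx -!map_mxM mxE. Qed.

Lemma GammaQ_sym : GammaQ^T = GammaQ.
Proof. by apply/matrixP => i j; rewrite !mxE mul22C. Qed.

(* The dual basis rows X j, with X j . y = y_j, form a left inverse of Gamma. *)
Lemma GammaQ_unit : GammaQ \in unitmx.
Proof.
have [perfect22 _] : perfect (mul22 A) by case: HA => _ [_ [_ [_ [_ [_ [_ []]]]]]].
have coord_additive j : additive_fun (fun y : L2 => y 0 j) by move=> y y'; rewrite mxE.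
have /fin_all_exists [X dualX] j : exists x : L2, forall y, mul22 A x y = y 0 j.
  by have [x [xj _]] := perfect22 _ (coord_additive j); exists x.
pose Xm : 'M[int]_(b2 A) := \matrix_j X j.
have XmGamma : Xm *m Gamma A = 1%:M.
  apply/matrixP => j k; have := dualX j (ebasis k).
  rewrite mul22_Gamma -(rowK X j) -row_mul /ebasis trmx_delta -colE !mxE => ->.
  by rewrite eq_sym.
have := congr1 (@int2rat _ _) XmGamma; rewrite /int2rat map_mxM map_mx1 => /mulmx1_unit.
by case.
Qed.

Local Open Scope sesquilinear_scope.

Lemma GammaQ_no_pos_orth_pair : bplus_one A -> no_pos_orth_pair GammaQ.
Proof.
move=> [lam [Gchar one_pos]] p q pq0 pp_gt0 qq_gt0.
set GC := map_mx _ (Gamma A) in Gchar.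
have GC_herm : GC \is hermsymmx.
  apply: realsym_hermsym; last by apply/mxOverP => i j; rewrite mxE realz.
  by apply/is_hermitianmxP; rewrite expr0 scale1r; apply/matrixP => i j; rewrite !mxE mul22C.
have GC_bform x y :
    (map_mx ratr x *m GC *m (map_mx ratr y)^t* ) 0 0 = ratr (bform GammaQ x y) :> algC.
  have -> : GC = map_mx ratr GammaQ by apply/matrixP => i j; rewrite !mxE ratr_int.
  have -> : (map_mx ratr y)^t* = map_mx (@ratr algC) y^T.
    by apply/matrixP => i j; rewrite !mxE fmorph_rat.
  by rewrite -!map_mxM mxE.
apply: (hermitian_one_pos_eig_no_orth_pair GC_herm Gchar one_pos
          (a := map_mx ratr p) (b := map_mx ratr q)); rewrite GC_bform.
- by rewrite ltr0q.
- by rewrite ltr0q.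
- by rewrite pq0 rmorph0.
- by rewrite bform_sym ?GammaQ_sym // pq0 rmorph0.
Qed.

Local Close Scope sesquilinear_scope.

Lemma prod4_eq0 : bplus_one A -> forall x y z w, prod4 x y z w = 0.
Proof.
move=> Hb; apply: prod4_eq0_of_no_pair => p q pq0 pp_gt0 qq_gt0.
by apply: (GammaQ_no_pos_orth_pair Hb (a := int2rat p) (b := int2rat q));
  rewrite bform_GammaQ ?pq0 ?ltr0z.
Qed.

Definition prodQ (i j : 'I_(b1 A)) : 'rV[rat]_(b2 A) := int2rat (mul11 A (ebasis i) (ebasis j)).

Definition ITQ : 'M[rat]_(b2 A) := (\sum_i \sum_j <<prodQ i j>>)%MS.

Lemma prodQ_sub_ITQ i j : (prodQ i j <= ITQ)%MS.
Proof. by apply: (sumsmx_sup i) => //; apply: (sumsmx_sup j) => //; rewrite genmxE. Qed.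

Lemma ITQ_isotropic : bplus_one A -> ITQ *m GammaQ *m ITQ^T = 0.
Proof.
move=> Hb.
have gen_orth p (Z : 'M_(p, b2 A)) :
    (forall i j, prodQ i j *m GammaQ *m Z^T = 0) -> ITQ *m GammaQ *m Z^T = 0.
  move=> prodZ; apply/eqP; rewrite -mulmxA; apply/eqP/sub_kermxP.
  apply/sumsmx_subP => i _; apply/sumsmx_subP => j _; rewrite genmxE.
  by apply/sub_kermxP; rewrite mulmxA prodZ.
apply: (gen_orth) => k l; apply: trmx_inj; rewrite trmx0 !trmx_mul trmxK GammaQ_sym mulmxA.
apply: gen_orth => i j; apply/rowP => s; rewrite ord1 [RHS]mxE.
rewrite -[LHS]/(bform GammaQ (prodQ i j) (prodQ k l)) bform_GammaQ.
by rewrite -/(prod4 _ _ _ _) prod4_eq0.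
Qed.

Lemma rank_IT_le1 : bplus_one A -> (rank_IT A <= 1)%N.
Proof.
move=> Hb; apply: (isotropic_rank_le1 GammaQ_sym GammaQ_unit);
  [exact: GammaQ_no_pos_orth_pair | exact: ITQ_isotropic].
Qed.

Lemma prodQC i j : prodQ j i = - prodQ i j.
Proof. by rewrite /prodQ mul11C /int2rat map_mxN. Qed.

Lemma prodQ_coords (v : 'rV[rat]_(b2 A)) : v != 0 -> (forall i j, (prodQ i j <= v)%MS) ->
  exists2 O : 'M[rat]_(b1 A), O^T = - O & forall i j, prodQ i j = O i j *: v.
Proof.
move=> v_neq0 prod_v; have /existsP[k vk] : [exists k, v 0 k != 0].
  by apply: contraR v_neq0 => /existsPn v0; apply/eqP/rowP => k; rewrite mxE; apply/eqP/negPn.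
pose O := \matrix_(i, j) (prodQ i j 0 k / v 0 k).
have prodO i j : prodQ i j = O i j *: v.
  have [D defD] := submxP (prod_v i j).
  have prod_D : prodQ i j = D 0 0 *: v by rewrite defD {1}[D]mx11_scalar mul_scalar_mx.
  by rewrite {1}prod_D mxE prod_D mxE mulfK.
exists O => //; apply/matrixP => i j; rewrite !mxE.
by have /rowP/(_ k) := prodQC i j; rewrite !mxE => ->; rewrite mulNr.
Qed.

Lemma rank_kerT_coords (v : 'rV[rat]_(b2 A)) (O : 'M[rat]_(b1 A)) :
  v != 0 -> (forall i j, prodQ i j = O i j *: v) -> rank_kerT A = (b1 A - \rank O)%N.
Proof.
move=> v_neq0 prodO; have v_free : row_free v by rewrite /row_free rank_rV v_neq0.
have Tmat_col j : int2rat (Tmat j) = col j O *m v.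
  apply/matrixP => i l; rewrite !mxE big_ord1 !mxE.
  by have /rowP/(_ l) := prodO i j; rewrite !mxE.
have ker_col p (K : 'M_(p, b1 A)) j : (K <= kermx (int2rat (Tmat j)))%MS = (K *m col j O == 0).
  by apply/sub_kermxP/eqP => [|KO]; rewrite Tmat_col mulmxA;
    [move/eqP; rewrite mulmx_free_eq0 // => /eqP | rewrite KO mul0mx].
rewrite /rank_kerT -mxrank_ker; apply: eqmx_rank; apply/andP; split.
  apply/sub_kermxP/matrixP => r j; rewrite [RHS]mxE.
  have /eqP/matrixP/(_ r 0) : (\bigcap_i kermx (int2rat (Tmat i)))%MS *m col j O == 0.
    by rewrite -ker_col; apply: (bigcapmx_inf j).
  by rewrite colE mulmxA -colE !mxE.
by apply/sub_bigcapmxP => j _; rewrite ker_col colE mulmxA mulmx_ker mul0mx.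
Qed.

Lemma rank_kerT_full : (forall i j, prodQ i j = 0) -> rank_kerT A = b1 A.
Proof.
move=> prod0; apply/eqP; rewrite eqn_leq rank_leq_col -{1}(mxrank1 rat (b1 A)).
apply: mxrankS; apply/sub_bigcapmxP => j _; apply/sub_kermxP.
suff -> : int2rat (Tmat j) = 0 by rewrite mulmx0.
by apply/matrixP => i k; have /rowP/(_ k) := prod0 i j; rewrite !mxE.
Qed.

End CohomologyAlgebra.

Theorem mainTheorem3 (A : coh_data) :
  is_cohomology_algebra A -> bplus_one A ->
  (rank_IT A <= 1)%N /\ ~~ odd (tilde_b1 A).
Proof.
move=> HA Hb; split; first exact: rank_IT_le1.
have [v ITv] := rank_le1_sub_row (rank_IT_le1 HA Hb).
have prod_v i j : (prodQ i j <= v)%MS := submx_trans (prodQ_sub_ITQ i j) ITv.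
have [v0|v_neq0] := eqVneq v 0.
  rewrite /tilde_b1 rank_kerT_full ?subnn // => i j.
  by apply: (@submx0null _ _ 1); rewrite -v0.
have [O O_skew prodO] := prodQ_coords HA v_neq0 prod_v.
by rewrite /tilde_b1 (rank_kerT_coords v_neq0 prodO) subKn ?rank_leq_row ?skew_rank_even.
Qed.
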